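(* Let $(E,\mathcal{E},\mu)$ be a non-atomic $\sigma$-finite measure space with $\mu(E)=\infty$. Let $(a_n)_{n\ge1}$ be positive numbers with $a_n\to\infty$ and $a_n=o(n)$. For each $n$ let $P_n$ be a probability measure on $(E,\mathcal{E})$ such that $\mu_n:=(n/a_n)P_n$ satisfies $\mu_n(B)\le\mu_{n+1}(B)$ and $\mu_n(B)\to\mu(B)$ for every $B\in\mathcal{E}$. Then for any fixed $k\in\mathbb{N}_+$ and any $f\in L^2(\mu^k)$, $$\Big(\frac{n}{a_n}\Big)^{k/2}\int_{E^k} f\,dP_n^k\to0\qquad (n\to\infty).$$
   Context: $\mu^k$ and $P_n^k$ denote $k$-fold product measures on $E^k$. *)

From HB Require Import structures.
From mathcomp Require Import all_boot all_order all_algebra.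
From mathcomp Require Import all_classical all_reals all_analysis.
Set Implicit Arguments. Unset Strict Implicit. Unset Printing Implicit Defensive.
Import Order.TTheory GRing.Theory Num.Theory.
Import numFieldNormedType.Exports.
Local Open Scope classical_set_scope.
Local Open Scope ring_scope.

(* ptype E k : the space E^(k+1) = (...((E * E) * E) ... ) * E
   (k+1 factors), with its product sigma-algebra *)
Fixpoint ptype d (E : measurableType d) (k : nat) : {d' & measurableType d'} :=
  match k with
  | 0 => existT _ d E
  | S k => existT _ _ (Measurable.clone _ (projT2 (ptype E k) * E)%type _)
  end.

Fixpoint pmeas d (E : measurableType d) (R : realType)
  (m : {sigma_finite_measure set E -> \bar R}) (k : nat) :
  {measure set (projT2 (ptype E k)) -> \bar R} :=
  match k as k return {measure set (projT2 (ptype E k)) -> \bar R} with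
  | 0 => m
  | S k => Measure.clone _ _ R (pmeas m k \x m)%E _
  end.

(* E^k and mu^k for k >= 1 *)
Definition powT d (E : measurableType d) (k : nat) : measurableType _ :=
  projT2 (ptype E k.-1).
Definition powM d (E : measurableType d) (R : realType)
  (m : {sigma_finite_measure set E -> \bar R}) (k : nat) :
  {measure set powT E k -> \bar R} := pmeas m k.-1.

Definition is_atom d (E : measurableType d) (R : realType)
  (mu : set E -> \bar R) (A : set E) : Prop :=
  [/\ measurable A, (0 < mu A)%E &
   forall B : set E, measurable B -> B `<=` A ->
     mu B = 0%E \/ mu (A `\` B) = 0%E].

Definition non_atomic d (E : measurableType d) (R : realType)
  (mu : set E -> \bar R) : Prop :=
  forall A : set E, ~ is_atom mu A.

From HB Require Import structures.
From mathcomp Require Import all_boot all_order all_algebra.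
From mathcomp Require Import all_classical all_reals all_analysis.
From mathcomp Require Import measurable_realfun ring lra.
Set Implicit Arguments. Unset Strict Implicit. Unset Printing Implicit Defensive.
Import Order.TTheory GRing.Theory Num.Theory.
Import numFieldNormedType.Exports.
Local Open Scope classical_set_scope.
Local Open Scope ring_scope.

(* Since (n/a_n) P_n increases to mu, P_n <= (a_n/n) mu setwise, hence
   P_n^k <= s_n^2 mu^k with s_n = (a_n/n)^(k/2) -> 0.  The pointwise bound
   |y| <= min(y^2, h^2)/(2r) + y^2/h + r/2, integrated against P_n^k with
   r = s_n delta, gives
     s_n^-1 \int |f| dP_n^k
       <= \int min(f^2, h^2) dmu^k / (2 delta) + s_n \int f^2 dmu^k / h + delta/2,
   and the first term is small for small h by dominated convergence. *)

Definition le_mscale d (T : measurableType d) (R : realType) (c : R)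
    (m1 m2 : set T -> \bar R) : Prop :=
  forall A, measurable A -> (m1 A <= c%:E * m2 A)%E.

Lemma le_mscale_integral d (T : measurableType d) (R : realType)
    (m1 m2 : {measure set T -> \bar R}) (c : R) (g : T -> \bar R) :
  0 <= c -> le_mscale c m1 m2 ->
  (forall x, 0 <= g x)%E -> measurable_fun setT g ->
  (\int[m1]_x g x <= c%:E * \int[m2]_x g x)%E.
Proof.
move=> c_ge0 m12 g_ge0 mg.
rewrite -(ge0_integral_mscale _ _ (NngNum c_ge0)) //.
exact: ge0_le_measure_integral.
Qed.

Lemma le_mscale_product d1 d2 (T1 : measurableType d1) (T2 : measurableType d2)
    (R : realType) (m1 m1' : {measure set T1 -> \bar R})
    (m2 m2' : {sigma_finite_measure set T2 -> \bar R}) (c1 c2 : R) :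
  0 <= c1 -> 0 <= c2 -> le_mscale c1 m1 m1' -> le_mscale c2 m2 m2' ->
  le_mscale (c1 * c2) (m1 \x m2)%E (m1' \x m2')%E.
Proof.
move=> c1_ge0 c2_ge0 m11' m22' C mC; rewrite /product_measure1 /=.
have m2xC := measurable_fun_xsection m2 mC.
have m2'xC := measurable_fun_xsection m2' mC.
apply: (@le_trans _ _ (\int[m1]_x (c2%:E * m2' (xsection C x)))%E).
  apply: ge0_le_integral => //; first exact: measurable_funeM.
  by move=> x _; apply: m22'; exact: measurable_xsection.
apply: le_trans (le_mscale_integral c1_ge0 m11' _ _) _.
- by move=> x; rewrite mule_ge0.
- exact: measurable_funeM.
by rewrite ge0_integralZl_EFin // EFinM muleA.
Qed.

Lemma le_mscale_pmeas d (E : measurableType d) (R : realType)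
    (m1 m2 : {sigma_finite_measure set E -> \bar R}) (c : R) j :
  0 <= c -> le_mscale c m1 m2 -> le_mscale (c ^+ j.+1) (pmeas m1 j) (pmeas m2 j).
Proof.
move=> c_ge0 m12; elim: j => [|j IH]; first by rewrite expr1.
by rewrite exprSr; apply: le_mscale_product => //; exact: exprn_ge0.
Qed.

Lemma pmeas_probability_setT d (E : measurableType d) (R : realType)
    (P : probability E R) j :
  pmeas P j setT = 1%E.
Proof.
elim: j => [|j IH]; first exact: probability_setT.
by rewrite /= -setXTT product_measure1E // IH mul1e; exact: probability_setT.
Qed.

Lemma nondecreasing_le_cvge (R : realType) (x : nat -> \bar R) (l : \bar R) n :
  (forall m, (n <= m)%N -> (x m <= x m.+1)%E) -> x m @[m --> \oo] --> l ->
  (x n <= l)%E.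
Proof.
move=> x_nd xl.
have x_ge m : (n <= m)%N -> (x n <= x m)%E.
  elim: m => [|m IH]; first by rewrite leqn0 => /eqP ->.
  rewrite leq_eqVlt ltnS => /predU1P[<-//|nm].
  exact: le_trans (IH nm) (x_nd m nm).
apply: (cvge_to_ge xl); near=> m; apply: x_ge.
by near: m; exact: nbhs_infty_ge.
Unshelve. all: by end_near. Qed.

Lemma le_mscale_nondecreasing_cvg d (T : measurableType d) (R : realType)
    (mu : set T -> \bar R) (P : nat -> set T -> \bar R) (w : nat -> R) n :
  0 < w n ->
  (forall m B, (n <= m)%N -> measurable B ->
     ((w m)%:E * P m B <= (w m.+1)%:E * P m.+1 B)%E) ->
  (forall B, measurable B -> ((w m)%:E * P m B)%E @[m --> \oo] --> mu B) ->
  le_mscale (w n)^-1 (P n) mu.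
Proof.
move=> wn_gt0 wP_nd wP_cvg B mB.
have wPn_le := nondecreasing_le_cvge (fun m nm => wP_nd m B nm mB) (wP_cvg B mB).
rewrite -[P n B]mul1e -(mulVf (lt0r_neq0 wn_gt0)) EFinM -muleA.
by rewrite lee_wpmul2l // lee_fin invr_ge0 ltW.
Qed.

Lemma cvge0_abse_le (R : realType) T (F : set_system T) {FF : Filter F}
    (y : T -> \bar R) :
  (forall e : R, 0 < e -> \forall x \near F, (`|y x| <= e%:E)%E) ->
  y x @[x --> F] --> 0%E.
Proof.
move=> y_small; apply/fine_cvgP; split.
  apply: filterS (y_small _ ltr01) => x yx1.
  by rewrite -abse_fin_num ge0_fin_numE // (le_lt_trans yx1) ?ltry.
apply/cvgr0Pnorm_le => e e_gt0; apply: filterS (y_small _ e_gt0) => x yxe.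
have yx_fin : y x \is a fin_num.
  by rewrite -abse_fin_num ge0_fin_numE // (le_lt_trans yxe) ?ltry.
by rewrite -lee_fin /= -abse_EFin fineK.
Qed.

Lemma integral_min_sqr_small d (T : measurableType d) (R : realType)
    (M : {measure set T -> \bar R}) (f : T -> R) (e : R) :
  measurable_fun setT f -> M.-integrable setT (fun x => (f x ^+ 2)%:E) -> 0 < e ->
  exists2 h : R, 0 < h &
    (\int[M]_x (Num.min (f x ^+ 2) (h ^+ 2))%:E <= e%:E)%E.
Proof.
move=> mf f2int e_gt0.
pose G (m : nat) x := Num.min (f x ^+ 2) (harmonic m).
have mG m : measurable_fun setT (fun x => (G m x)%:E).
  apply/measurable_EFinP; apply: measurable_minr; first exact: measurable_funX.
  exact: measurable_cst.
have G_ge0 m x : 0 <= G m x by rewrite le_min sqr_ge0 harmonic_ge0.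
have G_cvg0 x : [set: T] x -> (G m x)%:E @[m --> \oo] --> 0%E.
  move=> _; apply: cvg_EFin; first exact: nearW.
  apply: (squeeze_cvgr _ (cvg_cst 0) cvg_harmonic).
  by near=> m; rewrite G_ge0 /= ge_min lexx orbT.
have G_le m x : [set: T] x -> (`|(G m x)%:E| <= (f x ^+ 2)%:E)%E.
  by move=> _; rewrite gee0_abs ?lee_fin // ge_min lexx.
have := dominated_cvg measurableT mG G_cvg0 (fun x _ => isT : (f x ^+ 2)%:E \is a fin_num)
  f2int G_le.
have e_gt0' : (0 < e%:E)%E by rewrite lte_fin.
rewrite integral0 => /(_ _ (open_ereal_lt' e_gt0')).
move=> [m _ /(_ m (leqnn m)) /= IGm].
exists (Num.sqrt (harmonic m)); first by rewrite sqrtr_gt0 harmonic_gt0.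
by rewrite sqr_sqrtr ?harmonic_ge0 // ltW.
Unshelve. all: by end_near. Qed.

Lemma normr_le_min_sqr (R : realFieldType) (r h y : R) : 0 < r -> 0 < h ->
  `|y| <= (2 * r)^-1 * Num.min (y ^+ 2) (h ^+ 2) + h^-1 * y ^+ 2 + r / 2.
Proof.
move=> r_gt0 h_gt0; rewrite -(real_normK (num_real y)).
have b_ge0 := normr_ge0 y; set b := `|y| in b_ge0 *.
have [b_le_h|h_lt_b] := lerP b h.
- have -> : Num.min (b ^+ 2) (h ^+ 2) = b ^+ 2.
    by apply/min_idPl; rewrite lerXn2r ?nnegrE // ltW.
  have b_le : b <= (2 * r)^-1 * b ^+ 2 + r / 2.
    rewrite -(ler_pM2l (_ : 0 < 2 * r)); last lra.
    rewrite mulrDr mulrA mulfV ?mul1r; last lra.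
    have := sqr_ge0 (b - r); lra.
  have : 0 <= h^-1 * b ^+ 2 by rewrite mulr_ge0 ?invr_ge0 ?sqr_ge0 // ltW.
  lra.
- have b_le : b <= h^-1 * b ^+ 2.
    by rewrite mulrC ler_pdivlMr // expr2 ler_pM2l //; lra.
  have : 0 <= (2 * r)^-1 * Num.min (b ^+ 2) (h ^+ 2).
    by rewrite mulr_ge0 // ?invr_ge0 ?le_min ?sqr_ge0 //; lra.
  lra.
Qed.

Lemma integral_abs_le_trunc d (T : measurableType d) (R : realType)
    (Q M : {measure set T -> \bar R}) (c r h : R) (f : T -> R) :
  0 <= c -> 0 < r -> 0 < h -> (Q setT <= 1)%E -> le_mscale c Q M ->
  measurable_fun setT f ->
  (\int[Q]_x `|f x|%:E <=
     (c / (2 * r))%:E * \int[M]_x (Num.min (f x ^+ 2) (h ^+ 2))%:E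
     + (c / h)%:E * \int[M]_x (f x ^+ 2)%:E + (r / 2)%:E)%E.
Proof.
move=> c_ge0 r_gt0 h_gt0 Q_le1 QM mf.
pose tr x := Num.min (f x ^+ 2) (h ^+ 2).
have tr_ge0 x : 0 <= tr x by rewrite le_min !sqr_ge0.
have mf2 : measurable_fun setT (fun x => f x ^+ 2) by exact: measurable_funX.
have mtr : measurable_fun setT tr.
  by apply: measurable_minr => //; exact: measurable_cst.
pose g x := (2 * r)^-1 * tr x + h^-1 * f x ^+ 2.
have g_ge0 x : 0 <= g x.
  by apply: addr_ge0; apply: mulr_ge0; rewrite ?invr_ge0 ?tr_ge0 ?sqr_ge0 //; lra.
have mg : measurable_fun setT g.
  by apply: measurable_funD; apply: measurable_funM => //; exact: measurable_cst.
apply: (@le_trans _ _ (\int[Q]_x ((g x)%:E + (r / 2)%:E))%E).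
  apply: ge0_le_integral => //.
  - by apply/measurable_EFinP; apply: measurableT_comp => //; exact: normr_measurable.
  - by apply: emeasurable_funD; [exact/measurable_EFinP | exact: measurable_cst].
  - by move=> x _; rewrite -EFinD lee_fin normr_le_min_sqr.
rewrite ge0_integralD //; last 3 first.
- by move=> x _; rewrite lee_fin.
- exact/measurable_EFinP.
- by move=> x _; rewrite lee_fin; lra.
rewrite integral_cst //; apply: leeD.
  apply: le_trans (le_mscale_integral c_ge0 QM _ _) _.
  - by move=> x; rewrite lee_fin.
  - exact/measurable_EFinP.
  under eq_integral do rewrite EFinD (EFinM (2 * r)^-1) (EFinM h^-1).
  rewrite ge0_integralD //; last 4 first.
  - by move=> x _; rewrite mule_ge0 // lee_fin ?invr_ge0 //; lra.
  - by apply: measurable_funeM; exact/measurable_EFinP.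
  - by move=> x _; rewrite mule_ge0 // lee_fin ?invr_ge0 ?sqr_ge0 // ltW.
  - by apply: measurable_funeM; exact/measurable_EFinP.
  rewrite !ge0_integralZl_EFin //; last 6 first.
  - by move=> x _; rewrite lee_fin sqr_ge0.
  - exact/measurable_EFinP.
  - by rewrite invr_ge0 ltW.
  - by move=> x _; rewrite lee_fin.
  - exact/measurable_EFinP.
  - by rewrite invr_ge0; lra.
  have int_ge0 (u : T -> R) : (forall x, 0 <= u x) -> (0 <= \int[M]_x (u x)%:E)%E.
    by move=> u_ge0; apply: integral_ge0 => x _; rewrite lee_fin.
  have f2_ge0 x : 0 <= f x ^+ 2 := sqr_ge0 (f x).
  rewrite muleDr ?ge0_adde_def ?inE ?mule_ge0 ?lee_fin ?invr_ge0 ?int_ge0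
    ?(ltW h_gt0) //; last lra.
  by rewrite !muleA -!EFinM.
rewrite -[X in (_ <= X)%E]mule1; apply: lee_wpmul2l => //; rewrite lee_fin; lra.
Qed.

Lemma scaled_integral_abs_cvg0 d (T : measurableType d) (R : realType)
    (Q : nat -> {measure set T -> \bar R}) (M : {measure set T -> \bar R})
    (s : nat -> R) (f : T -> R) :
  (\forall n \near \oo,
    [/\ 0 < s n, (Q n setT <= 1)%E & le_mscale (s n ^+ 2) (Q n) M]) ->
  s n @[n --> \oo] --> 0 ->
  measurable_fun setT f -> M.-integrable setT (fun x => (f x ^+ 2)%:E) ->
  ((s n)^-1%:E * \int[Q n]_x `|f x|%:E)%E @[n --> \oo] --> 0%E.
Proof.
move=> QM s_cvg0 mf f2int; apply: cvge0_abse_le => e e_gt0.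
pose del := e / 2; have del_gt0 : 0 < del by rewrite divr_gt0.
have [h h_gt0 trunc_small] :=
  integral_min_sqr_small mf f2int (exprn_gt0 2 del_gt0).
have f2_fin := integrable_fin_num measurableT f2int.
have trunc_fin : (\int[M]_x (Num.min (f x ^+ 2) (h ^+ 2))%:E)%E \is a fin_num.
  rewrite ge0_fin_numE; first exact: le_lt_trans trunc_small (ltry _).
  by apply: integral_ge0 => x _; rewrite lee_fin le_min !sqr_ge0.
set K := fine (\int[M]_x (f x ^+ 2)%:E)%E.
set Eh := fine (\int[M]_x (Num.min (f x ^+ 2) (h ^+ 2))%:E)%E.
have K_ge0 : 0 <= K by rewrite fine_ge0 // integral_ge0 // => x _; rewrite lee_fin sqr_ge0.
have Eh_le : Eh <= del ^+ 2 by rewrite -lee_fin fineK.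
have K1_gt0 : 0 < K + 1 by lra.
have eta_gt0 : 0 < del * h / (K + 1) by rewrite divr_gt0 ?mulr_gt0.
move/cvgr0Pnorm_le : s_cvg0 => /(_ _ eta_gt0) s_small.
near=> n.
have [s_gt0 Q_le1 Qdom] : [/\ 0 < s n, (Q n setT <= 1)%E & le_mscale (s n ^+ 2) (Q n) M].
  by near: n.
have s_le : `|s n| <= del * h / (K + 1) by near: n.
have := integral_abs_le_trunc (sqr_ge0 (s n)) (mulr_gt0 s_gt0 del_gt0) h_gt0 Q_le1 Qdom mf.
rewrite -(fineK f2_fin) -(fineK trunc_fin) -/K -/Eh -!EFinM -!EFinD => bound.
rewrite gee0_abs; last by rewrite mule_ge0 ?integral_ge0 // lee_fin invr_ge0 ltW.
apply: le_trans (lee_wpmul2l _ bound) _; first by rewrite lee_fin invr_ge0 ltW.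
rewrite -EFinM lee_fin.
have -> : (s n)^-1 * (s n ^+ 2 / (2 * (s n * del)) * Eh + s n ^+ 2 / h * K + s n * del / 2)
    = Eh / (2 * del) + s n * K / h + del / 2.
  by field; rewrite !gt_eqF.
have : Eh / (2 * del) <= del / 2.
  by rewrite ler_pdivrMr ?mulr_gt0 //; move: Eh_le; rewrite expr2; nra.
have : s n * K / h <= del.
  rewrite ler_pdivrMr //.
  rewrite (ger0_norm (ltW s_gt0)) ler_pdivlMr // in s_le.
  nra.
rewrite /del; lra.
Unshelve. all: by end_near. Qed.

Lemma inv_powR_half_sqr (R : realType) (w : R) k :
  0 <= w -> ((w `^ (k%:R / 2))^-1) ^+ 2 = w^-1 ^+ k.
Proof.
move=> w_ge0; rewrite !exprVn -powR_mulrn ?powR_ge0 // -powRrM.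
by rewrite divfK ?pnatr_eq0 // powR_mulrn.
Qed.

Lemma inv_powR_half_cvg0 (R : realType) (w : nat -> R) k :
  (\forall n \near \oo, 0 < w n) -> (w n)^-1 @[n --> \oo] --> 0 ->
  (w n `^ (k.+1%:R / 2))^-1 @[n --> \oo] --> 0.
Proof.
move=> w_gt0 winv_cvg0.
have -> : 0 = Num.sqrt (0 ^+ k.+1) :> R by rewrite expr0n sqrtr0.
apply: cvg_trans (near_eq_cvg _) (cvg_comp _ _ (cvg_comp _ _ winv_cvg0
  (@exprn_continuous R k.+1 0)) (@sqrt_continuous R _)).
apply: filterS w_gt0 => n wn_gt0.
by rewrite /= -inv_powR_half_sqr ?sqrtr_sqr ?gtr0_norm ?invr_gt0 ?powR_gt0 ?ltW.
Qed.

Theorem lemma3 (d : measure_display) (E : measurableType d) (R : realType)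
  (mu : {sigma_finite_measure set E -> \bar R})
  (a : nat -> R) (P : nat -> probability E R) (k : nat)
  (f : powT E k -> R) :
  non_atomic mu ->
  mu setT = +oo%E ->
  (forall n, (0 < n)%N -> 0 < a n) ->
  a n @[n --> \oo] --> +oo ->
  a n / n%:R @[n --> \oo] --> 0 ->
  (forall n (B : set E), (0 < n)%N -> measurable B ->
     ((n%:R / a n)%:E * P n B <= (n.+1%:R / a n.+1)%:E * P n.+1 B)%E) ->
  (forall B : set E, measurable B ->
     ((n%:R / a n)%:E * P n B)%E @[n --> \oo] --> mu B) ->
  (0 < k)%N ->
  measurable_fun setT f ->
  (powM mu k).-integrable setT (fun x => (f x ^+ 2)%:E) ->
  (((n%:R / a n) `^ (k%:R / 2))%:E * \int[powM (P n) k]_x (f x)%:E)%E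
    @[n --> \oo] --> 0%E.
Proof.
move=> _ _ a_gt0 _ an_cvg0 P_nd P_cvg k_gt0 mf f2int.
case: k k_gt0 f mf f2int => // k _ f mf f2int.
pose w n := n%:R / a n.
pose s n := (w n `^ (k.+1%:R / 2))^-1.
have w_gt0 n : (0 < n)%N -> 0 < w n by move=> n_gt0; rewrite divr_gt0 ?a_gt0 ?ltr0n.
have s_gt0 n : (0 < n)%N -> 0 < s n by move=> /w_gt0/powR_gt0; rewrite invr_gt0.
have s_cvg0 : s n @[n --> \oo] --> 0.
  apply: inv_powR_half_cvg0; last by under eq_fun do rewrite invf_div.
  by near=> n; apply: w_gt0; near: n; exact: nbhs_infty_gt.
apply/cvg_abse0P; apply: (squeeze_cvge _ (cvg_cst 0%E)
  (scaled_integral_abs_cvg0 (Q := fun n => powM (P n) k.+1) _ s_cvg0 mf f2int)).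
  near=> n; rewrite abse_ge0 /= abseM invrK gee0_abs ?lee_fin ?powR_ge0 //.
  by rewrite lee_wpmul2l ?lee_fin ?powR_ge0 ?le_abse_integral //; exact/measurable_EFinP.
near=> n; have n_gt0 : (0 < n)%N by near: n; exact: nbhs_infty_gt.
split; [exact: s_gt0 | by rewrite /powM /= pmeas_probability_setT |].
rewrite inv_powR_half_sqr ?ltW ?w_gt0 //.
apply: le_mscale_pmeas; first by rewrite invr_ge0 ltW ?w_gt0.
apply: le_mscale_nondecreasing_cvg (w_gt0 _ n_gt0) _ P_cvg => m B nm mB.
by apply: P_nd => //; exact: leq_trans nm.
Unshelve. all: by end_near. Qed.
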